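(* For each $n\in\mathbb{N}$, $\mathrm{WR}\Sigma_0(\Sigma_n)\vdash\mathrm{B}\Sigma_{n+2}$.
   Context: All theories contain $\mathrm{PA}^-$; $\mathrm{B}\Sigma_k$ is $\Sigma_k$-collection together with $\mathrm{I}\Delta_0$. $\Sigma_0(\Sigma_n)$ is the closure of the $\Sigma_n$ formulas under Boolean operations and bounded quantification. For a formula $\phi(x,y)$ (possibly with further free variables), $\mathrm{WR}\phi$ is the universal closure of $\forall x\,\exists y<a\,\phi(x,y)\to\exists y<a\,\forall b\,\exists x>b\,\phi(x,y)$, and $\mathrm{WR}\Gamma=\mathrm{I}\Delta_0\cup\{\mathrm{WR}\phi:\phi\in\Gamma\}$. *)

Inductive term : Type :=
| tvar : nat -> term
| tzero : term
| tone : term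
| tplus : term -> term -> term
| ttimes : term -> term -> term.

(* Bounded quantifiers are primitive: [fBAll t φ] is  ∀x < t. φ  and
   [fBEx t φ] is ∃x < t. φ, where t is interpreted outside the binder
   (so x does not occur in t); the bound variable is de Bruijn index 0 in φ. *)
Inductive form : Type :=
| fEq : term -> term -> form
| fLt : term -> term -> form
| fBot : form
| fNot : form -> form
| fAnd : form -> form -> form
| fOr : form -> form -> form
| fImp : form -> form -> form
| fAll : form -> form
| fEx : form -> form
| fBAll : term -> form -> form
| fBEx : term -> form -> form.

Record structure : Type := {
  dom :> Type;
  zero : dom;
  one : dom;
  add : dom -> dom -> dom;
  mul : dom -> dom -> dom;
  lt : dom -> dom -> Prop
}.

Definition scons {A : Type} (x : A) (e : nat -> A) : nat -> A :=
  fun n => match n with 0 => x | S k => e k end.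

Fixpoint eval (M : structure) (e : nat -> M) (t : term) : M :=
  match t with
  | tvar n => e n
  | tzero => zero M
  | tone => one M
  | tplus a b => add M (eval M e a) (eval M e b)
  | ttimes a b => mul M (eval M e a) (eval M e b)
  end.

Fixpoint sat (M : structure) (e : nat -> M) (f : form) : Prop :=
  match f with
  | fEq a b => eval M e a = eval M e b
  | fLt a b => lt M (eval M e a) (eval M e b)
  | fBot => False
  | fNot p => ~ sat M e p
  | fAnd p q => sat M e p /\ sat M e q
  | fOr p q => sat M e p \/ sat M e q
  | fImp p q => sat M e p -> sat M e q
  | fAll p => forall x : M, sat M (scons x e) p
  | fEx p => exists x : M, sat M (scons x e) p
  | fBAll t p => forall x : M, lt M x (eval M e t) -> sat M (scons x e) p
  | fBEx t p => exists x : M, lt M x (eval M e t) /\ sat M (scons x e) p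
  end.

Inductive Delta0 : form -> Prop :=
| d0Eq a b : Delta0 (fEq a b)
| d0Lt a b : Delta0 (fLt a b)
| d0Bot : Delta0 fBot
| d0Not p : Delta0 p -> Delta0 (fNot p)
| d0And p q : Delta0 p -> Delta0 q -> Delta0 (fAnd p q)
| d0Or p q : Delta0 p -> Delta0 q -> Delta0 (fOr p q)
| d0Imp p q : Delta0 p -> Delta0 q -> Delta0 (fImp p q)
| d0BAll t p : Delta0 p -> Delta0 (fBAll t p)
| d0BEx t p : Delta0 p -> Delta0 (fBEx t p).

Inductive IsSigma : nat -> form -> Prop :=
| sig0 p : Delta0 p -> IsSigma 0 p
| sigPi n p : IsPi n p -> IsSigma (S n) p
| sigEx n p : IsSigma (S n) p -> IsSigma (S n) (fEx p)
with IsPi : nat -> form -> Prop :=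
| pi0 p : Delta0 p -> IsPi 0 p
| piSig n p : IsSigma n p -> IsPi (S n) p
| piAll n p : IsPi (S n) p -> IsPi (S n) (fAll p).

Inductive Sigma0Sigma (n : nat) : form -> Prop :=
| ssBase p : IsSigma n p -> Sigma0Sigma n p
| ssNot p : Sigma0Sigma n p -> Sigma0Sigma n (fNot p)
| ssAnd p q : Sigma0Sigma n p -> Sigma0Sigma n q -> Sigma0Sigma n (fAnd p q)
| ssOr p q : Sigma0Sigma n p -> Sigma0Sigma n q -> Sigma0Sigma n (fOr p q)
| ssImp p q : Sigma0Sigma n p -> Sigma0Sigma n q -> Sigma0Sigma n (fImp p q)
| ssBAll t p : Sigma0Sigma n p -> Sigma0Sigma n (fBAll t p)
| ssBEx t p : Sigma0Sigma n p -> Sigma0Sigma n (fBEx t p).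

(* M is a model of PA^- (Kaye's axiomatization: discretely ordered
   commutative semiring with least element 0). *)
Definition PAminus (M : structure) : Prop :=
  let O := zero M in let I := one M in
  let pl := add M in let ti := mul M in let lt := lt M in
  (forall x y z : M, pl x (pl y z) = pl (pl x y) z) /\
  (forall x y : M, pl x y = pl y x) /\
  (forall x y z : M, ti x (ti y z) = ti (ti x y) z) /\
  (forall x y : M, ti x y = ti y x) /\
  (forall x y z : M, ti x (pl y z) = pl (ti x y) (ti x z)) /\
  (forall x : M, pl x O = x /\ ti x O = O) /\
  (forall x : M, ti x I = x) /\
  (forall x : M, ~ lt x x) /\
  (forall x y z : M, lt x y -> lt y z -> lt x z) /\
  (forall x y : M, lt x y \/ x = y \/ lt y x) /\
  (forall x y z : M, lt x y -> lt (pl x z) (pl y z)) /\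
  (forall x y z : M, lt O z -> lt x y -> lt (ti x z) (ti y z)) /\
  (forall x y : M, lt x y -> exists z, pl x z = y) /\
  lt O I /\
  (forall x : M, lt O x -> (I = x \/ lt I x)) /\
  (forall x : M, O = x \/ lt O x).

Definition Ind_inst (M : structure) (p : form) : Prop :=
  forall e : nat -> M,
    sat M (scons (zero M) e) p ->
    (forall x : M, sat M (scons x e) p -> sat M (scons (add M x (one M)) e) p) ->
    forall x : M, sat M (scons x e) p.

Definition IDelta0 (M : structure) : Prop :=
  forall p, Delta0 p -> Ind_inst M p.

(* Collection axiom for φ(x, y, params):  y is variable 0, x is variable 1,
   the parameters are the remaining variables; a is a fresh variable.
   ∀x<a ∃y φ(x,y) → ∃b ∀x<a ∃y<b φ(x,y). *)
Definition Coll_inst (M : structure) (p : form) : Prop :=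
  forall (e : nat -> M) (a : M),
    (forall x : M, lt M x a -> exists y : M, sat M (scons y (scons x e)) p) ->
    exists b : M, forall x : M, lt M x a ->
      exists y : M, lt M y b /\ sat M (scons y (scons x e)) p.

Definition models_BSigma (k : nat) (M : structure) : Prop :=
  IDelta0 M /\ forall p, IsSigma k p -> Coll_inst M p.

(* WR φ for φ(x, y, params): y is variable 0, x is variable 1, the
   parameters are the remaining variables; a and b are fresh variables.
   ∀x ∃y<a φ(x,y) → ∃y<a ∀b ∃x>b φ(x,y). *)
Definition WR_inst (M : structure) (p : form) : Prop :=
  forall (e : nat -> M) (a : M),
    (forall x : M, exists y : M, lt M y a /\ sat M (scons y (scons x e)) p) ->
    exists y : M, lt M y a /\
      forall b : M, exists x : M, lt M b x /\ sat M (scons y (scons x e)) p.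

Definition models_WRSigma0Sigma (n : nat) (M : structure) : Prop :=
  IDelta0 M /\ forall p, Sigma0Sigma n p -> WR_inst M p.

(* WR for Sigma_0(Sigma_n) formulas picks one y < a that serves unboundedly many x.  This gives
   Sigma_0(Sigma_n)-collection at once: if the witnesses for the x < a had no common bound, every
   bound would be defeated by some x < a, and WR fixes one x < a defeating arbitrarily large
   bounds although x has a witness.

   Sigma_0(Sigma_k)-induction for k <= n follows by induction on k.  A Sigma_0(Sigma_(k+1))
   formula p(x) has Sigma_0(Sigma_k) approximants A(s, x) that agree with p(x) from some
   Sigma_0(Sigma_(k+1))-definable stage on; collection bounds these stages under bounded
   quantifiers.  If p(0) and p(x) -> p(x+1) but not p(a), then at each stage s the induction
   hypothesis gives a breakpoint x < a of A(s, -), unless A(s, -) is not true at 0 and false at a;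
   WR fixes one such x for arbitrarily late stages, and at a stage where A is correct at 0, x,
   x+1 and a this contradicts the behaviour of p.

   For Pi_(n+1)-collection, suppose every x < a has a witness v (T(w, v, x) for all w) but no
   bound works, so for each b some x < a has every v < b refuted by some w.  For each t,
   Sigma_0(Sigma_n)-induction gives the largest b <= t for which some x < a has every v < b
   refuted below t, and WR fixes one such x for unboundedly many t.  By collection, v + 1 is
   refuted below every large t, where v is the witness of x; so there b > v, and v itself is
   refuted for x.

   Finally, a Sigma_(n+2) formula is an existential Pi_(n+1) formula once blocks of existential
   quantifiers are contracted into bounded pairs, Pi_(n+1) being closed under bounded
   existentials by Sigma_0(Sigma_n)-collection. *)

From Stdlib Require Import Classical FunctionalExtensionality Lia.

Notation "x .: e" := (scons x e) (at level 55, right associativity).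

Definition up (f : nat -> nat) (k : nat) : nat :=
  match k with 0 => 0 | S k => S (f k) end.

Fixpoint rename_term (f : nat -> nat) (t : term) : term :=
  match t with
  | tvar k => tvar (f k)
  | tzero => tzero
  | tone => tone
  | tplus a b => tplus (rename_term f a) (rename_term f b)
  | ttimes a b => ttimes (rename_term f a) (rename_term f b)
  end.

Fixpoint rename (f : nat -> nat) (p : form) : form :=
  match p with
  | fEq a b => fEq (rename_term f a) (rename_term f b)
  | fLt a b => fLt (rename_term f a) (rename_term f b)
  | fBot => fBot
  | fNot p => fNot (rename f p)
  | fAnd p q => fAnd (rename f p) (rename f q)
  | fOr p q => fOr (rename f p) (rename f q)
  | fImp p q => fImp (rename f p) (rename f q)
  | fAll p => fAll (rename (up f) p)
  | fEx p => fEx (rename (up f) p)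
  | fBAll t p => fBAll (rename_term f t) (rename (up f) p)
  | fBEx t p => fBEx (rename_term f t) (rename (up f) p)
  end.

Lemma eval_rename_term M e f t :
  eval M e (rename_term f t) = eval M (fun k => e (f k)) t.
Proof. induction t; simpl; congruence. Qed.

Lemma scons_up {A} (x : A) e f : (fun k => (x .: e) (up f k)) = x .: fun k => e (f k).
Proof. apply functional_extensionality; intros [|k]; reflexivity. Qed.

Lemma sat_rename M p : forall f e, sat M e (rename f p) <-> sat M (fun k => e (f k)) p.
Proof.
  induction p; intros f e; simpl; rewrite ?eval_rename_term;
    try setoid_rewrite IHp; try setoid_rewrite IHp1; try setoid_rewrite IHp2;
    try setoid_rewrite scons_up; reflexivity.
Qed.

Scheme IsSigma_mind := Minimality for IsSigma Sort Prop
  with IsPi_mind := Minimality for IsPi Sort Prop.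
Combined Scheme IsSigma_IsPi_mind from IsSigma_mind, IsPi_mind.

Lemma Delta0_rename f p : Delta0 p -> Delta0 (rename f p).
Proof. intros hp; revert f; induction hp; intros f; simpl; constructor; auto. Qed.

Lemma Sigma_Pi_rename :
  (forall m p, IsSigma m p -> forall f, IsSigma m (rename f p)) /\
  (forall m p, IsPi m p -> forall f, IsPi m (rename f p)).
Proof.
  apply IsSigma_IsPi_mind; intros; simpl;
    solve [apply sigEx; auto | apply piAll; auto | constructor; auto using Delta0_rename].
Qed.

Lemma Sigma0Sigma_rename m f p : Sigma0Sigma m p -> Sigma0Sigma m (rename f p).
Proof.
  intros hp; revert f; induction hp; intros f; simpl;
    [apply ssBase, Sigma_Pi_rename | apply ssNot | apply ssAnd | apply ssOr | apply ssImp
    | apply ssBAll | apply ssBEx]; auto.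
Qed.

Lemma Sigma_Pi_succ :
  (forall m p, IsSigma m p -> IsSigma (S m) p) /\ (forall m p, IsPi m p -> IsPi (S m) p).
Proof.
  apply IsSigma_IsPi_mind; intros;
    first [apply sigPi, pi0; assumption | apply piSig, sig0; assumption
          | apply sigPi; assumption | apply sigEx; assumption
          | apply piSig; assumption | apply piAll; assumption].
Qed.

Lemma Sigma0Sigma_mono m m' p : m <= m' -> Sigma0Sigma m p -> Sigma0Sigma m' p.
Proof.
  intros hm hp; induction hm as [|m' _ IH]; [exact hp|].
  clear hp; induction IH;
    [apply ssBase, Sigma_Pi_succ | apply ssNot | apply ssAnd | apply ssOr | apply ssImp
    | apply ssBAll | apply ssBEx]; assumption.
Qed.

Lemma Sigma0Sigma_0_Delta0 p : Sigma0Sigma 0 p -> Delta0 p.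
Proof.
  induction 1 as [p hp | | | | | |]; try (constructor; assumption).
  inversion hp; assumption.
Qed.

Lemma Sigma_Pi_negation :
  (forall m p, IsSigma m p -> exists q, IsPi m q /\ forall M e, sat M e q <-> ~ sat M e p) /\
  (forall m p, IsPi m p -> exists q, IsSigma m q /\ forall M e, sat M e q <-> ~ sat M e p).
Proof.
  apply IsSigma_IsPi_mind.
  - intros p hp. exists (fNot p). split; [repeat constructor; exact hp | reflexivity].
  - intros m p _ [q [hq hs]]. exists q. split; [constructor; exact hq | exact hs].
  - intros m p _ [q [hq hs]]. exists (fAll q). split; [constructor; exact hq|].
    intros M e; simpl. setoid_rewrite hs. firstorder.
  - intros p hp. exists (fNot p). split; [repeat constructor; exact hp | reflexivity].
  - intros m p _ [q [hq hs]]. exists q. split; [constructor; exact hq | exact hs].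
  - intros m p _ [q [hq hs]]. exists (fEx q). split; [constructor; exact hq|].
    intros M e; simpl. setoid_rewrite hs.
    split; [intros [x hx] hall; exact (hx (hall x)) | intros hn; apply not_all_not_ex;
      intros hall; apply hn; intros x; apply NNPP, hall].
Qed.

Fixpoint keep {A} (i : nat) (e r : nat -> A) : nat -> A :=
  match i with 0 => r | S i => e 0 .: keep i (fun k => e (S k)) r end.

Lemma keep_comp {A B} (g : A -> B) i e r k :
  g (keep i e r k) = keep i (fun j => g (e j)) (fun j => g (r j)) k.
Proof. revert e k; induction i as [|i IH]; intros e [|k]; simpl; auto. Qed.

Section PAminusModel.

Variable M : structure.
Hypothesis HPA : PAminus M.

Notation succ x := (add M x (one M)).

Definition leM (x y : M) : Prop := lt M x y \/ x = y.

Lemma lt_irrefl x : ~ lt M x x.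
Proof. destruct HPA as (_&_&_&_&_&_&_&H&_). apply H. Qed.

Lemma lt_trans x y z : lt M x y -> lt M y z -> lt M x z.
Proof. destruct HPA as (_&_&_&_&_&_&_&_&H&_). apply H. Qed.

Lemma lt_trichotomy x y : lt M x y \/ x = y \/ lt M y x.
Proof. destruct HPA as (_&_&_&_&_&_&_&_&_&H&_). apply H. Qed.

Lemma zero_leM x : leM (zero M) x.
Proof.
  destruct HPA as (_&_&_&_&_&_&_&_&_&_&_&_&_&_&_&H).
  destruct (H x); [right | left]; assumption.
Qed.

Lemma lt_succ x : lt M x (succ x).
Proof.
  destruct HPA as (_&addC&_&_&_&add0&_&_&_&_&addlt&_&_&lt01&_).
  specialize (addlt _ _ x lt01).
  rewrite (addC (zero M)), (addC (one M)), (proj1 (add0 x)) in addlt. exact addlt.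
Qed.

Lemma leM_succ x y : leM x y -> leM (succ x) (succ y).
Proof.
  destruct HPA as (_&_&_&_&_&_&_&_&_&_&addlt&_).
  intros [h | <-]; [left; apply addlt, h | right; reflexivity].
Qed.

Lemma leM_refl x : leM x x.
Proof. right; reflexivity. Qed.

Lemma lt_leM x y : lt M x y -> leM x y.
Proof. left; assumption. Qed.

Lemma lt_le_trans x y z : lt M x y -> leM y z -> lt M x z.
Proof. intros h [h' | <-]; [exact (lt_trans _ _ _ h h') | exact h]. Qed.

Lemma le_lt_trans x y z : leM x y -> lt M y z -> lt M x z.
Proof. intros [h | ->] h'; [exact (lt_trans _ _ _ h h') | exact h']. Qed.

Lemma leM_trans x y z : leM x y -> leM y z -> leM x z.
Proof. intros [h | ->] h'; [left; exact (lt_le_trans _ _ _ h h') | exact h']. Qed.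

Lemma not_lt_leM x y : ~ lt M x y -> leM y x.
Proof.
  intros h. destruct (lt_trichotomy x y) as [h' | [-> | h']];
    [contradiction | apply leM_refl | left; exact h'].
Qed.

Lemma not_lt_zero x : ~ lt M x (zero M).
Proof. intros h. apply (lt_irrefl x), (lt_le_trans _ _ _ h (zero_leM x)). Qed.

Lemma zero_lt_of_neq x : x <> zero M -> lt M (zero M) x.
Proof. intros h. destruct (zero_leM x) as [h' | h']; [exact h' | congruence]. Qed.

Lemma exists_upper_bound x y : exists z, leM x z /\ leM y z.
Proof.
  destruct (lt_trichotomy x y) as [h | [-> | h]];
    [exists y | exists y | exists x]; split; auto using leM_refl, lt_leM.
Qed.

Lemma exists_strict_upper_bound x y : exists z, lt M x z /\ lt M y z.
Proof.
  destruct (exists_upper_bound x y) as [z [hx hy]].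
  exists (succ z). split; eapply le_lt_trans; eauto using lt_succ.
Qed.

Definition eventually (Phi : M -> Prop) : Prop := exists z, forall s, leM z s -> Phi s.

Definition unbounded (Phi : M -> Prop) : Prop := forall b, exists x, lt M b x /\ Phi x.

Lemma eventually_and (Phi Psi : M -> Prop) :
  eventually Phi -> eventually Psi -> eventually (fun s => Phi s /\ Psi s).
Proof.
  intros [z1 h1] [z2 h2]. destruct (exists_upper_bound z1 z2) as [z [hz1 hz2]].
  exists z. intros s hs. split; [apply h1 | apply h2]; eapply leM_trans; eassumption.
Qed.

Lemma eventually_gt x : eventually (fun s => lt M x s).
Proof. exists (succ x). intros s hs. exact (lt_le_trans _ _ _ (lt_succ x) hs). Qed.

Lemma unbounded_eventually (Phi Psi : M -> Prop) :
  unbounded Phi -> eventually Psi -> exists s, Phi s /\ Psi s.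
Proof.
  intros hPhi [z hz]. destruct (hPhi z) as [s [hzs hs]].
  exists s. split; [exact hs | apply hz, lt_leM, hzs].
Qed.

Lemma failure_of_collection (Q : M -> M -> Prop) a :
  ~ (exists b, forall x, lt M x a -> exists y, lt M y b /\ Q x y) ->
  forall b, exists x, lt M x a /\ forall y, lt M y b -> ~ Q x y.
Proof.
  intros hno b. apply NNPP; intros hall. apply hno. exists b. intros x hx.
  apply NNPP; intros hx'. apply hall. exists x. split; [exact hx|].
  intros y hy hq. apply hx'. exists y. split; assumption.
Qed.

Definition definable (m : nat) (P : (nat -> M) -> Prop) : Prop :=
  exists p, Sigma0Sigma m p /\ forall e, sat M e p <-> P e.

Lemma definable_ext m P Q : definable m P -> (forall e, P e <-> Q e) -> definable m Q.
Proof. intros [p [hp hP]] hPQ. exists p. split; [exact hp | intros e; rewrite hP; apply hPQ]. Qed.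

Lemma definable_mono m m' P : m <= m' -> definable m P -> definable m' P.
Proof.
  intros hm [p [hp hP]]. exists p. split; [exact (Sigma0Sigma_mono _ _ _ hm hp) | exact hP].
Qed.

Lemma definable_Sigma m p : IsSigma m p -> definable m (fun e => sat M e p).
Proof. intros hp. exists p. split; [apply ssBase, hp | reflexivity]. Qed.

Lemma definable_Pi m p : IsPi m p -> definable m (fun e => sat M e p).
Proof.
  intros hp. destruct (proj2 Sigma_Pi_negation m p hp) as [q [hq hs]].
  exists (fNot q). split; [apply ssNot, ssBase, hq | intros e; simpl; rewrite hs; tauto].
Qed.

Lemma definable_lt m t1 t2 : definable m (fun e => lt M (eval M e t1) (eval M e t2)).
Proof.
  exists (fLt t1 t2).
  split; [apply (Sigma0Sigma_mono 0); [lia | apply ssBase, sig0, d0Lt] | reflexivity].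
Qed.

Lemma definable_eq m t1 t2 : definable m (fun e => eval M e t1 = eval M e t2).
Proof.
  exists (fEq t1 t2).
  split; [apply (Sigma0Sigma_mono 0); [lia | apply ssBase, sig0, d0Eq] | reflexivity].
Qed.

Lemma definable_not m P : definable m P -> definable m (fun e => ~ P e).
Proof.
  intros [p [hp hP]]. exists (fNot p).
  split; [apply ssNot, hp | intros e; simpl; rewrite hP; reflexivity].
Qed.

Lemma definable_and m P Q : definable m P -> definable m Q -> definable m (fun e => P e /\ Q e).
Proof.
  intros [p [hp hP]] [q [hq hQ]]. exists (fAnd p q).
  split; [apply ssAnd; assumption | intros e; simpl; rewrite hP, hQ; reflexivity].
Qed.

Lemma definable_or m P Q : definable m P -> definable m Q -> definable m (fun e => P e \/ Q e).
Proof.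
  intros [p [hp hP]] [q [hq hQ]]. exists (fOr p q).
  split; [apply ssOr; assumption | intros e; simpl; rewrite hP, hQ; reflexivity].
Qed.

Lemma definable_imp m P Q : definable m P -> definable m Q -> definable m (fun e => P e -> Q e).
Proof.
  intros [p [hp hP]] [q [hq hQ]]. exists (fImp p q).
  split; [apply ssImp; assumption | intros e; simpl; rewrite hP, hQ; reflexivity].
Qed.

Lemma definable_ball m t P :
  definable m P -> definable m (fun e => forall x, lt M x (eval M e t) -> P (x .: e)).
Proof.
  intros [p [hp hP]]. exists (fBAll t p).
  split; [apply ssBAll, hp | intros e; simpl; setoid_rewrite hP; reflexivity].
Qed.

Lemma definable_bex m t P :
  definable m P -> definable m (fun e => exists x, lt M x (eval M e t) /\ P (x .: e)).
Proof.
  intros [p [hp hP]]. exists (fBEx t p).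
  split; [apply ssBEx, hp | intros e; simpl; setoid_rewrite hP; reflexivity].
Qed.

Lemma definable_le m t1 t2 : definable m (fun e => leM (eval M e t1) (eval M e t2)).
Proof. apply definable_or; [apply definable_lt | apply definable_eq]. Qed.

Lemma definable_rename m f P : definable m P -> definable m (fun e => P (fun k => e (f k))).
Proof.
  intros [p [hp hP]]. exists (rename f p).
  split; [apply Sigma0Sigma_rename, hp | intros e; rewrite sat_rename; apply hP].
Qed.

Lemma definable_keep_drop m i d P :
  definable m P -> definable m (fun e => P (keep i e (fun k => e (i + d + k)))).
Proof.
  intros hP.
  apply (definable_ext _ _ _
           (definable_rename m (keep i (fun k => k) (fun k => i + d + k)) P hP)).
  intros e.
  rewrite (functional_extensionality _ _ (keep_comp e i (fun k => k) (fun k => i + d + k))).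
  reflexivity.
Qed.

Lemma definable_swap m P :
  definable m P -> definable m (fun e => P (e 1 .: e 0 .: fun k => e (S (S k)))).
Proof.
  intros hP. apply (definable_ext _ _ _ (definable_rename m (1 .: 0 .: fun k => S (S k)) P hP)).
  intros e.
  replace (fun k => e ((1 .: 0 .: fun k => S (S k)) k)) with (e 1 .: e 0 .: fun k => e (S (S k)));
    [reflexivity | apply functional_extensionality; intros [|[|k]]; reflexivity].
Qed.

Lemma definable_subst0 m t P :
  definable m P -> definable m (fun e => P (eval M e t .: fun k => e (S k))).
Proof.
  intros hP.
  apply (definable_ext _ _ _ (definable_bex m (tplus t tone) _
           (definable_and m _ _ (definable_eq m (tvar 0) (rename_term S t))
              (definable_keep_drop m 1 1 P hP)))).
  intros e; simpl. setoid_rewrite eval_rename_term. split.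
  - intros [x [_ [-> h]]]. exact h.
  - intros h. exists (eval M e t). split; [apply lt_succ | split; [reflexivity | exact h]].
Qed.

Lemma definable_at m P u : definable m P ->
  definable m (fun e => P (e 1 .: eval M e u .: fun k => e (S (S (S k))))).
Proof.
  intros hP. exact (definable_subst0 m u _ (definable_keep_drop m 2 1 _ (definable_swap m P hP))).
Qed.

Lemma definable_ball_tail m t P : definable m P ->
  definable m (fun e => forall x, lt M x (eval M (fun k => e (S k)) t) ->
                          P (e 0 .: x .: fun k => e (S k))).
Proof.
  intros hP.
  apply (definable_ext _ _ _ (definable_ball m (rename_term S t) _ (definable_swap m P hP))).
  intros e. rewrite eval_rename_term. reflexivity.
Qed.

Definition collection_for (P : (nat -> M) -> Prop) : Prop :=
  forall e a, (forall x, lt M x a -> exists y, P (y .: x .: e)) ->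
    exists b, forall x, lt M x a -> exists y, lt M y b /\ P (y .: x .: e).

Section WeakRegularity.

Variable n : nat.
Hypothesis HI : IDelta0 M.
Hypothesis HW : forall p, Sigma0Sigma n p -> WR_inst M p.

Lemma definable_WR P : definable n P -> forall e a,
  (forall x, exists y, lt M y a /\ P (y .: x .: e)) ->
  exists y, lt M y a /\ unbounded (fun x => P (y .: x .: e)).
Proof.
  intros [p [hp hP]] e a hall.
  destruct (HW p hp e a) as [y [hy hunb]].
  - intros x. destruct (hall x) as [y [hy h]]. exists y. split; [exact hy | apply hP, h].
  - exists y. split; [exact hy|]. intros b. destruct (hunb b) as [x [hx h]].
    exists x. split; [exact hx | apply hP, h].
Qed.

Lemma definable_collection P : definable n P -> collection_for P.
Proof.
  intros hP e a hall. apply NNPP; intros hunb.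
  assert (hD : definable n (fun E => lt M (E 0) (E 2) /\
                 forall y, lt M y (E 1) -> ~ P (y .: E 0 .: fun k => E (S (S (S k)))))).
  { exact (definable_and _ _ _ (definable_lt n (tvar 0) (tvar 2))
             (definable_ball n (tvar 1) _ (definable_not _ _ (definable_keep_drop n 2 2 P hP)))). }
  destruct (definable_WR _ hD (a .: e) a) as [x [hx hx']].
  - intros b. destruct (failure_of_collection _ a hunb b) as [x [hx hno]].
    exists x. split; [exact hx | split; [exact hx | exact hno]].
  - destruct (hall x hx) as [y hy]. destruct (hx' y) as [b [hyb [_ hno]]].
    exact (hno y hyb hy).
Qed.

Definition induction_for (m : nat) : Prop :=
  forall P, definable m P -> forall e, P (zero M .: e) ->
    (forall x, P (x .: e) -> P (succ x .: e)) -> forall x, P (x .: e).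

Lemma induction_Delta0 : induction_for 0.
Proof.
  intros P [p [hp hP]] e h0 hS x. apply hP.
  apply (HI p (Sigma0Sigma_0_Delta0 p hp) e); [apply hP, h0 | intros y hy; apply hP, hS, hP, hy].
Qed.

Lemma exists_breakpoint m Q : induction_for m -> definable m Q -> forall e a,
  Q (zero M .: e) -> ~ Q (a .: e) -> exists x, lt M x a /\ Q (x .: e) /\ ~ Q (succ x .: e).
Proof.
  intros hind hQ e a h0 ha. apply NNPP; intros hnone. apply ha.
  assert (hR : definable m (fun E => leM (E 0) (E 1) -> Q (E 0 .: fun k => E (S (S k))))).
  { exact (definable_imp _ _ _ (definable_le m (tvar 0) (tvar 1))
             (definable_keep_drop m 1 1 Q hQ)). }
  refine (hind _ hR (a .: e) (fun _ => h0) _ a (leM_refl a)).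
  intros z hz hle.
  assert (hza : lt M z a) by exact (lt_le_trans _ _ _ (lt_succ z) hle).
  apply NNPP; intros hq. apply hnone.
  exists z. split; [exact hza | split; [exact (hz (lt_leM _ _ hza)) | exact hq]].
Qed.

Record bounded_witnesses (k : nat) (p : form) (A : (nat -> M) -> Prop) : Prop := {
  witnesses_definable : definable k A;
  witnesses_sound : forall s e, A (s .: e) -> sat M e p;
  witnesses_mono : forall s s' e, leM s s' -> A (s .: e) -> A (s' .: e);
  witnesses_complete : forall e, sat M e p -> exists s, A (s .: e) }.

Arguments witnesses_definable {k p A}.
Arguments witnesses_sound {k p A}.
Arguments witnesses_mono {k p A}.
Arguments witnesses_complete {k p A}.

Lemma Sigma_bounded_witnesses k p : IsSigma (S k) p -> exists A, bounded_witnesses k p A.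
Proof.
  intros hp. remember (S k) as m eqn:hm.
  induction hp as [p _ | m p hp | m p _ IH]; [discriminate | injection hm as -> |].
  - exists (fun E => sat M (fun j => E (S j)) p). split.
    + exact (definable_keep_drop k 0 1 _ (definable_Pi k p hp)).
    + intros s e h. exact h.
    + intros s s' e _ h. exact h.
    + intros e h. exists (zero M). exact h.
  - destruct (IH hm) as [A hA].
    exists (fun E => exists w, lt M w (E 0) /\ A (E 0 .: w .: fun j => E (S j))). split.
    + exact (definable_bex k (tvar 0) _ (definable_swap k A (witnesses_definable hA))).
    + intros s e [w [_ h]]. exists w. exact (witnesses_sound hA s _ h).
    + intros s s' e hs [w [hw h]]. exists w.
      split; [exact (lt_le_trans _ _ _ hw hs) | exact (witnesses_mono hA s s' _ hs h)].
    + intros e [w hw]. destruct (witnesses_complete hA _ hw) as [s hs].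
      destruct (exists_strict_upper_bound w s) as [z [hwz hsz]].
      exists z, w. split; [exact hwz | exact (witnesses_mono hA s z _ (lt_leM _ _ hsz) hs)].
Qed.

(* [A] guesses [p] one level lower in the hierarchy; [G (s .: e)] says that the guesses at [e]
   are correct from stage [s] on. *)
Record approximation (k : nat) (p : form) (A G : (nat -> M) -> Prop) : Prop := {
  approximant_definable : definable k A;
  settled_definable : definable (S k) G;
  settled_exists : forall e, exists s, G (s .: e);
  settled_mono : forall e s s', leM s s' -> G (s .: e) -> G (s' .: e);
  approximant_correct : forall e s, G (s .: e) -> (A (s .: e) <-> sat M e p) }.

Arguments approximant_definable {k p A G}.
Arguments settled_definable {k p A G}.
Arguments settled_exists {k p A G}.
Arguments settled_mono {k p A G}.
Arguments approximant_correct {k p A G}.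

Definition approximable (k : nat) (p : form) : Prop := exists A G, approximation k p A G.

Lemma approximation_eventually k p A G : approximation k p A G ->
  forall e, eventually (fun s => A (s .: e) <-> sat M e p).
Proof.
  intros hA e. destruct (settled_exists hA e) as [z hz].
  exists z. intros s hs. exact (approximant_correct hA e s (settled_mono hA e z s hs hz)).
Qed.

Lemma approximable_ext k p q :
  (forall e, sat M e p <-> sat M e q) -> approximable k p -> approximable k q.
Proof.
  intros hpq (A & G & hA). exists A, G. split; try apply hA.
  intros e s hs. rewrite <- hpq. exact (approximant_correct hA e s hs).
Qed.

Lemma approximable_Sigma k p : IsSigma (S k) p -> approximable k p.
Proof.
  intros hp. destruct (Sigma_bounded_witnesses k p hp) as [A hA].
  exists A, (fun E => sat M (fun j => E (S j)) p -> A E). split.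
  - exact (witnesses_definable hA).
  - exact (definable_imp _ _ _ (definable_keep_drop (S k) 0 1 _ (definable_Sigma _ p hp))
             (definable_mono k (S k) A (le_S _ _ (le_n k)) (witnesses_definable hA))).
  - intros e. destruct (classic (sat M e p)) as [h | h].
    + destruct (witnesses_complete hA e h) as [s hs]. exists s. intros _. exact hs.
    + exists (zero M). intros h'. contradiction.
  - intros e s s' hs hG h. exact (witnesses_mono hA s s' e hs (hG h)).
  - intros e s hG. split; [apply (witnesses_sound hA) | exact hG].
Qed.

Lemma approximable_not k p : approximable k p -> approximable k (fNot p).
Proof.
  intros (A & G & hA). exists (fun E => ~ A E), G. split; try apply hA.
  - exact (definable_not _ _ (approximant_definable hA)).
  - intros e s hs. simpl. rewrite (approximant_correct hA e s hs). reflexivity.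
Qed.

Lemma approximable_and k p q : approximable k p -> approximable k q -> approximable k (fAnd p q).
Proof.
  intros (A1 & G1 & h1) (A2 & G2 & h2).
  exists (fun E => A1 E /\ A2 E), (fun E => G1 E /\ G2 E). split.
  - exact (definable_and _ _ _ (approximant_definable h1) (approximant_definable h2)).
  - exact (definable_and _ _ _ (settled_definable h1) (settled_definable h2)).
  - intros e. destruct (settled_exists h1 e) as [s1 hs1], (settled_exists h2 e) as [s2 hs2].
    destruct (exists_upper_bound s1 s2) as [s [hs1s hs2s]].
    exists s.
    split; [exact (settled_mono h1 e _ _ hs1s hs1) | exact (settled_mono h2 e _ _ hs2s hs2)].
  - intros e s s' hs [g1 g2].
    split; [exact (settled_mono h1 e _ _ hs g1) | exact (settled_mono h2 e _ _ hs g2)].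
  - intros e s [g1 g2]. simpl.
    rewrite (approximant_correct h1 e s g1), (approximant_correct h2 e s g2). reflexivity.
Qed.

Lemma approximable_ball k t p : S k <= n -> approximable k p -> approximable k (fBAll t p).
Proof.
  intros hk (A & G & hA).
  exists (fun E => forall x, lt M x (eval M (fun j => E (S j)) t) ->
                            A (E 0 .: x .: fun j => E (S j))),
         (fun E => forall x, lt M x (eval M (fun j => E (S j)) t) ->
                            G (E 0 .: x .: fun j => E (S j))).
  split.
  - exact (definable_ball_tail _ t A (approximant_definable hA)).
  - exact (definable_ball_tail _ t G (settled_definable hA)).
  - intros e. destruct (definable_collection G (definable_mono _ _ _ hk (settled_definable hA))
                          e (eval M e t)) as [b hb].
    { intros x _. exact (settled_exists hA (x .: e)). }
    exists b. intros x hx. destruct (hb x hx) as [s [hs hG]].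
    exact (settled_mono hA _ s b (lt_leM _ _ hs) hG).
  - intros e s s' hs hG x hx. exact (settled_mono hA _ s s' hs (hG x hx)).
  - intros e s hG. split; intros h x hx; apply (approximant_correct hA _ s (hG x hx)), h, hx.
Qed.

Lemma approximable_Sigma0Sigma k p : S k <= n -> Sigma0Sigma (S k) p -> approximable k p.
Proof.
  intros hk hp. induction hp as [p hp | p _ IH | p q _ IHp _ IHq | p q _ IHp _ IHq
                              | p q _ IHp _ IHq | t p _ IH | t p _ IH].
  - exact (approximable_Sigma k p hp).
  - exact (approximable_not k p IH).
  - exact (approximable_and k p q IHp IHq).
  - apply (approximable_ext k (fNot (fAnd (fNot p) (fNot q)))).
    + intros e; simpl; tauto.
    + exact (approximable_not _ _
               (approximable_and _ _ _ (approximable_not _ _ IHp) (approximable_not _ _ IHq))).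
  - apply (approximable_ext k (fNot (fAnd p (fNot q)))).
    + intros e; simpl; tauto.
    + exact (approximable_not _ _ (approximable_and _ _ _ IHp (approximable_not _ _ IHq))).
  - exact (approximable_ball k t p hk IH).
  - apply (approximable_ext k (fNot (fBAll t (fNot p)))).
    + intros e; simpl. split; [| intros [x [hx hp]] hall; exact (hall x hx hp)].
      intros hn. apply NNPP; intros hno. apply hn.
      intros x hx hp. apply hno. exists x. split; assumption.
    + exact (approximable_not _ _ (approximable_ball _ t _ hk (approximable_not _ _ IH))).
Qed.

(* The last two disjuncts provide a witness at every stage, as WR requires. *)
Definition stage_breakpoint (A : (nat -> M) -> Prop) (e : nat -> M) (a x s : M) : Prop :=
  lt M x a /\
  (A (s .: x .: e) /\ ~ A (s .: succ x .: e) \/ ~ A (s .: zero M .: e) \/ A (s .: a .: e)).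

Lemma definable_stage_breakpoint k A : definable k A ->
  definable k (fun E => stage_breakpoint A (fun j => E (S (S (S j)))) (E 2) (E 0) (E 1)).
Proof.
  intros hA.
  exact (definable_and _ _ _ (definable_lt k (tvar 0) (tvar 2))
    (definable_or _ _ _
       (definable_and _ _ _ (definable_at k A (tvar 0) hA)
          (definable_not _ _ (definable_at k A (tplus (tvar 0) tone) hA)))
       (definable_or _ _ _ (definable_not _ _ (definable_at k A tzero hA))
          (definable_at k A (tvar 2) hA)))).
Qed.

Lemma stage_breakpoint_exists k A : induction_for k -> definable k A ->
  forall e a s, lt M (zero M) a -> exists x, stage_breakpoint A e a x s.
Proof.
  intros hind hA e a s ha.
  destruct (classic (A (s .: zero M .: e) /\ ~ A (s .: a .: e))) as [[h0 ha'] | hno].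
  - destruct (exists_breakpoint k _ hind (definable_swap k A hA) (s .: e) a h0 ha')
      as [x [hx hbreak]].
    exists x. split; [exact hx | left; exact hbreak].
  - exists (zero M). split; [exact ha | right].
    destruct (classic (A (s .: zero M .: e))) as [h0 | h0]; [right | left; exact h0].
    apply NNPP; intros ha'. exact (hno (conj h0 ha')).
Qed.

Lemma approximation_induction k p A G : k <= n -> induction_for k -> approximation k p A G ->
  forall e, sat M (zero M .: e) p -> (forall x, sat M (x .: e) p -> sat M (succ x .: e) p) ->
  forall a, sat M (a .: e) p.
Proof.
  intros hk hind hA e h0 hS a. apply NNPP; intros ha.
  assert (ha0 : lt M (zero M) a) by (apply zero_lt_of_neq; intros ->; exact (ha h0)).
  destruct (definable_WR _ (definable_mono _ _ _ hk
              (definable_stage_breakpoint k A (approximant_definable hA))) (a .: e) a)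
    as [x [hx hunb]].
  { intros s. destruct (stage_breakpoint_exists k A hind (approximant_definable hA) e a s ha0)
      as [x hxs].
    exists x. split; [exact (proj1 hxs) | exact hxs]. }
  pose proof (approximation_eventually k p A G hA) as hev.
  destruct (unbounded_eventually _ _ hunb
              (eventually_and _ _ (eventually_and _ _ (hev (zero M .: e)) (hev (a .: e)))
                                  (eventually_and _ _ (hev (x .: e)) (hev (succ x .: e)))))
    as (s & [_ hbreak] & [c0 ca] & [cx cSx]).
  destruct hbreak as [[h1 h2] | [h1 | h1]].
  - exact (h2 (proj2 cSx (hS x (proj1 cx h1)))).
  - exact (h1 (proj2 c0 h0)).
  - exact (ha (proj1 ca h1)).
Qed.

Lemma induction_Sigma0Sigma m : m <= n -> induction_for m.
Proof.
  induction m as [|k IH]; intros hm; [exact induction_Delta0|].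
  intros P [p [hp hP]] e h0 hS x. apply hP.
  destruct (approximable_Sigma0Sigma k p hm hp) as (A & G & hA).
  apply (approximation_induction k p A G); [lia | apply IH; lia | exact hA | apply hP, h0 |].
  intros y hy. apply hP, hS, hP, hy.
Qed.

Definition refuted_below (T : (nat -> M) -> Prop) (e : nat -> M) (x b t : M) : Prop :=
  forall v, lt M v b -> exists w, lt M w t /\ ~ T (w .: v .: x .: e).

Definition some_refuted_below (T : (nat -> M) -> Prop) (e : nat -> M) (a b t : M) : Prop :=
  exists x, lt M x a /\ refuted_below T e x b t.

Definition maximal_refutation (T : (nat -> M) -> Prop) (e : nat -> M) (a x t : M) : Prop :=
  lt M x a /\ exists b, lt M b (succ t) /\ refuted_below T e x b t /\
    (b = t \/ ~ some_refuted_below T e a (succ b) t).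

Lemma refuted_below_antitone T e x b b' t :
  leM b' b -> refuted_below T e x b t -> refuted_below T e x b' t.
Proof. intros hb h v hv. exact (h v (lt_le_trans _ _ _ hv hb)). Qed.

Section RefutationDefinable.

Variable T : (nat -> M) -> Prop.
Hypothesis hT : definable n T.

Lemma definable_refuted_below :
  definable n (fun E => refuted_below T (fun j => E (S (S (S j)))) (E 0) (E 1) (E 2)).
Proof.
  exact (definable_ball n (tvar 1) _
           (definable_bex n (tvar 3) _ (definable_not _ _ (definable_keep_drop n 3 2 T hT)))).
Qed.

Lemma definable_some_refuted_below :
  definable n (fun E => some_refuted_below T (fun j => E (S (S (S j)))) (E 2) (E 0) (E 1)).
Proof.
  exact (definable_bex n (tvar 2) _ (definable_keep_drop n 3 1 _ definable_refuted_below)).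
Qed.

Lemma definable_maximal_refutation :
  definable n (fun E => maximal_refutation T (fun j => E (S (S (S j)))) (E 2) (E 0) (E 1)).
Proof.
  exact (definable_and _ _ _ (definable_lt n (tvar 0) (tvar 2))
    (definable_bex n (tplus (tvar 1) tone) _
       (definable_and _ _ _
          (definable_keep_drop n 3 1 _ (definable_swap n _ definable_refuted_below))
          (definable_or _ _ _ (definable_eq n (tvar 0) (tvar 2))
             (definable_not _ _ (definable_subst0 n (tplus (tvar 0) tone) _
                (definable_keep_drop n 1 1 _ definable_some_refuted_below))))))).
Qed.

End RefutationDefinable.

Section PiCollection.

Variables (T : (nat -> M) -> Prop) (e : nat -> M) (a : M).
Hypothesis hT : definable n T.
Hypothesis hall : forall x, lt M x a -> exists v, forall w, T (w .: v .: x .: e).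
Hypothesis hfail : forall b, exists x, lt M x a /\
  forall v, lt M v b -> exists w, ~ T (w .: v .: x .: e).

Lemma some_refuted_eventually b : eventually (fun t => some_refuted_below T e a b t).
Proof.
  destruct (hfail b) as [x [hx hv]].
  destruct (definable_collection _ (definable_not _ _ hT) (x .: e) b hv) as [c hc].
  exists c. intros t hct. exists x. split; [exact hx|].
  intros v hvb. destruct (hc v hvb) as [w [hw hnT]].
  exists w. split; [exact (lt_le_trans _ _ _ hw hct) | exact hnT].
Qed.

Lemma maximal_refutation_exists t : exists x, maximal_refutation T e a x t.
Proof.
  destruct (classic (some_refuted_below T e a t t)) as [[x [hx hr]] | ht].
  - exists x. split; [exact hx|].
    exists t. split; [apply lt_succ | split; [exact hr | left; reflexivity]].
  - assert (h0 : some_refuted_below T e a (zero M) t).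
    { destruct (hfail (zero M)) as [x [hx _]]. exists x. split; [exact hx|].
      intros v hv. destruct (not_lt_zero v hv). }
    destruct (exists_breakpoint n _ (induction_Sigma0Sigma n (le_n n))
                (definable_some_refuted_below T hT)
                (t .: a .: e) t h0 ht) as [b [hbt [[x [hx hr]] hnext]]].
    exists x. split; [exact hx|]. exists b.
    split; [exact (lt_trans _ _ _ hbt (lt_succ t)) | split; [exact hr | right; exact hnext]].
Qed.

Lemma refutation_absurd : False.
Proof.
  destruct (definable_WR _ (definable_maximal_refutation T hT) (a .: e) a) as [x [hx hunb]].
  { intros t. destruct (maximal_refutation_exists t) as [x hxt].
    exists x. split; [exact (proj1 hxt) | exact hxt]. }
  destruct (hall x hx) as [v hv].
  destruct (unbounded_eventually _ _ hunb
              (eventually_and _ _ (some_refuted_eventually (succ v)) (eventually_gt v)))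
    as (t & [_ (b & _ & hr & hmax)] & hsome & hvt).
  assert (hvb : lt M v b).
  { apply NNPP; intros hvb. pose proof (not_lt_leM _ _ hvb) as hbv.
    destruct hmax as [-> | hnext]; [exact (lt_irrefl t (le_lt_trans _ _ _ hbv hvt)) |].
    apply hnext. destruct hsome as [x' [hx' hr']].
    exists x'. split; [exact hx'|].
    exact (refuted_below_antitone _ _ _ _ _ _ (leM_succ _ _ hbv) hr'). }
  destruct (hr v hvb) as [w [_ hw]]. exact (hw (hv w)).
Qed.

End PiCollection.

Definition Pi_definable (P : (nat -> M) -> Prop) : Prop :=
  exists T, definable n T /\ forall e, P e <-> forall w, T (w .: e).

Lemma Pi_collection P : Pi_definable P -> collection_for P.
Proof.
  intros [T [hT hP]] e a hall. apply NNPP; intros hunb.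
  apply (refutation_absurd T e a hT).
  - intros x hx. destruct (hall x hx) as [v hv]. exists v. apply hP, hv.
  - intros b. destruct (failure_of_collection _ a hunb b) as [x [hx hno]].
    exists x. split; [exact hx|]. intros v hv. apply not_all_ex_not.
    intros hT'. exact (hno v hv (proj2 (hP _) hT')).
Qed.

Lemma Pi_definable_Sigma q : IsSigma n q -> Pi_definable (fun e => sat M e q).
Proof.
  intros hq. exists (fun E => sat M (fun j => E (S j)) q).
  split; [exact (definable_keep_drop n 0 1 _ (definable_Sigma n q hq)) |].
  intros e. split; [intros h w; exact h | intros h; exact (h (zero M))].
Qed.

Lemma Pi_definable_keep_drop i d P :
  Pi_definable P -> Pi_definable (fun e => P (keep i e (fun k => e (i + d + k)))).
Proof.
  intros [T [hT hP]]. exists (fun E => T (keep (S i) E (fun k => E (S i + d + k)))).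
  split; [exact (definable_keep_drop n (S i) d T hT) | intros e; apply hP].
Qed.

Lemma Pi_definable_all P : Pi_definable P -> Pi_definable (fun e => forall w, P (w .: e)).
Proof.
  intros [T [hT hP]].
  exists (fun E => forall w1, lt M w1 (E 0) -> forall w2, lt M w2 (E 0) ->
                   T (w2 .: w1 .: fun j => E (S j))).
  split; [exact (definable_ball n (tvar 0) _ (definable_ball n (tvar 1) _
                   (definable_keep_drop n 2 1 T hT))) |].
  intros e. setoid_rewrite hP. split.
  - intros h w w1 _ w2 _. apply h.
  - intros h w1 w2. destruct (exists_strict_upper_bound w1 w2) as [w [h1 h2]].
    exact (h w w1 h1 w2 h2).
Qed.

Lemma eval_rename_succ (x : M) e t : eval M (x .: e) (rename_term S t) = eval M e t.
Proof. rewrite eval_rename_term. reflexivity. Qed.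

Lemma Pi_definable_bex t P :
  Pi_definable P -> Pi_definable (fun e => exists y, lt M y (eval M e t) /\ P (y .: e)).
Proof.
  intros [T [hT hP]].
  exists (fun E => exists y, lt M y (eval M E (rename_term S t)) /\
                   forall w, lt M w (E 0) -> T (w .: y .: fun j => E (S j))).
  split; [exact (definable_bex n (rename_term S t) _ (definable_ball n (tvar 1) _
                   (definable_keep_drop n 2 1 T hT))) |].
  intros e. setoid_rewrite hP. setoid_rewrite eval_rename_succ. split.
  - intros [y [hy h]] b. exists y. split; [exact hy | intros w _; apply h].
  - intros h. apply NNPP; intros hno.
    destruct (definable_collection _ (definable_not _ _ hT) e (eval M e t)) as [b hb].
    { intros y hy. apply not_all_ex_not. intros hall. exact (hno (ex_intro _ y (conj hy hall))). }
    destruct (h b) as [y [hy hall]]. destruct (hb y hy) as [w [hw hnT]]. exact (hnT (hall w hw)).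
Qed.

Lemma Pi_definable_Pi q : IsPi (S n) q -> Pi_definable (fun e => sat M e q).
Proof.
  intros hq. remember (S n) as m eqn:hm.
  induction hq as [q _ | m q hq | m q _ IH]; [discriminate | injection hm as -> |].
  - exact (Pi_definable_Sigma q hq).
  - exact (Pi_definable_all _ (IH hm)).
Qed.

Definition pair_below (Q : (nat -> M) -> Prop) (e : nat -> M) : Prop :=
  exists y1, lt M y1 (e 0) /\ exists y2, lt M y2 (e 0) /\ Q (y2 .: y1 .: fun j => e (S j)).

Lemma Pi_definable_pair_below Q : Pi_definable Q -> Pi_definable (pair_below Q).
Proof.
  intros hQ. exact (Pi_definable_bex (tvar 0) _ (Pi_definable_bex (tvar 1) _
                      (Pi_definable_keep_drop 2 1 Q hQ))).
Qed.

Lemma pair_below_iff Q e : (exists y1 y2, Q (y2 .: y1 .: e)) <-> exists v, pair_below Q (v .: e).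
Proof.
  split.
  - intros [y1 [y2 h]]. destruct (exists_strict_upper_bound y1 y2) as [v [h1 h2]].
    exists v, y1. split; [exact h1 | exists y2; split; [exact h2 | exact h]].
  - intros [v [y1 [_ [y2 [_ h]]]]]. exists y1, y2. exact h.
Qed.

Lemma Sigma_exists_Pi p : IsSigma (S (S n)) p ->
  exists Q, Pi_definable Q /\ forall e, sat M e p <-> exists y, Q (y .: e).
Proof.
  intros hp. remember (S (S n)) as m eqn:hm.
  induction hp as [p _ | m p hp | m p _ IH]; [discriminate | injection hm as -> |].
  - exists (fun E => sat M (fun j => E (S j)) p).
    split; [exact (Pi_definable_keep_drop 0 1 _ (Pi_definable_Pi p hp)) |].
    intros e. split; [intros h; exists (zero M); exact h | intros [y h]; exact h].
  - destruct (IH hm) as [Q [hQ hp']]. exists (pair_below Q).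
    split; [exact (Pi_definable_pair_below Q hQ) |].
    intros e. simpl. setoid_rewrite hp'. apply pair_below_iff.
Qed.

Lemma Sigma_collection p : IsSigma (S (S n)) p -> collection_for (fun e => sat M e p).
Proof.
  intros hp. destruct (Sigma_exists_Pi p hp) as [Q [hQ hp']].
  intros e a hall.
  destruct (Pi_collection _ (Pi_definable_pair_below Q hQ) e a) as [b hb].
  { intros x hx. destruct (hall x hx) as [y hy]. apply hp' in hy. destruct hy as [z hz].
    apply pair_below_iff. exists y, z. exact hz. }
  exists b. intros x hx. destruct (hb x hx) as [v [hvb [y [hyv [z [_ hz]]]]]].
  exists y. split; [exact (lt_trans _ _ _ hyv hvb) | apply hp'; exists z; exact hz].
Qed.

End WeakRegularity.

End PAminusModel.

Theorem lemma5p6 (n : nat) (M : structure) :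
  PAminus M -> models_WRSigma0Sigma n M -> models_BSigma (n + 2) M.
Proof.
  intros HPA [HI HW]. split; [exact HI |].
  intros p hp. rewrite PeanoNat.Nat.add_comm in hp.
  exact (Sigma_collection M HPA n HI HW p hp).
Qed.
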